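(* In the changepoint model of the context, for $0<i\le n$, $$\tilde q_i=\sum_{\ell=i}^{n-1}\tilde c_{i\ell}\,\tilde q_{\ell+1}+\tilde c_{in}.$$
   Context: Model: Let $n\ge 1$ and fix observed data $y_1,\dots,y_n$. Let $(\mathbb X,\mathcal X)$, $(\mathbb Y,\mathcal Y)$ be standard Borel spaces, $\psi$ a $\sigma$-finite measure on $(\mathbb Y,\mathcal Y)$, $\mathcal J$ a probability measure on $(\mathbb X,\mathcal X)$, and $q_{ji}\in[0,1]$ for $0\le j<i\le n$. The model consists of random variables $C_i\in\{0,\dots,i\}$, $X_i\in\mathbb X$, $Y_i\in\mathbb Y$, $i=1,\dots,n$, with joint law factorizing as: $P(C_1=0)=q_{01}$, $P(C_1=1)=1-q_{01}$; for $i\ge2$, $C_i$ depends on the past only through $C_{i-1}$, with $P(C_i=j\mid C_{i-1}=j)=q_{ji}$ and $P(C_i=i\mid C_{i-1}=j)=1-q_{ji}$ ($0\le j\le i-1$); $X_1\sim\mathcal J$ independent of $C_1$; for $i\ge 2$, $X_i$ depends on the past only through $(C_i,X_{i-1})$, with $X_i\sim\mathcal J$ if $C_i=i$ and $X_i=X_{i-1}$ if $C_i<i$; $Y_i$ depends on all other variables only through $X_i$, with density $p(Y_i=y\mid X_i=x)$ w.r.t. $\psi$. Assume $\int\prod_{\ell=j}^i p(Y_\ell=y_\ell\mid X_\ell=x)\,\mathcal J(dx)>0$ for all $0<j\le i\le n$. $Y_{a:b}=y_{a:b}$ abbreviates $Y_a=y_a,\dots,Y_b=y_b$. Notation: $\tilde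 c_{ji}=P(C_i=j\mid C_{i+1}=i+1,Y_{1:i}=y_{1:i})$ for $0<i<n$, and $\tilde c_{jn}=P(C_n=j\mid Y_{1:n}=y_{1:n})$; $\tilde q_i=P(C_i=i\mid Y_{1:n}=y_{1:n})$. *)

From HB Require Import structures.
From mathcomp Require Import all_boot all_order all_algebra.
From mathcomp Require Import all_classical all_reals all_analysis.
Set Implicit Arguments. Unset Strict Implicit. Unset Printing Implicit Defensive.
Import Order.TTheory GRing.Theory Num.Theory.
Import numFieldNormedType.Exports.
Local Open Scope classical_set_scope.
Local Open Scope ring_scope.

(* A changepoint path is a function c : nat -> nat, c k standing for C_k
   (only the values c 1, ..., c m matter for a path of length m).
   [cp_paths m] enumerates all c with c k \in {0,...,k} for 1 <= k <= m
   (and c k = 0 otherwise); impossible paths simply get probability 0. *)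
Fixpoint cp_paths (m : nat) : seq (nat -> nat) :=
  match m with
  | 0 => [:: fun _ => 0%N]
  | m'.+1 => [seq (fun k => if k == m'.+1 then j else c k)
              | c <- cp_paths m', j <- iota 0 m'.+2]
  end.

Section Changepoint.
Context (R : realType) (dX : measure_display) (X : measurableType dX)
  (J : probability X R) (dY : measure_display) (Y : measurableType dY)
  (p : Y -> X -> R)   (* p y x = p(Y_l = y | X_l = x) *)
  (y : nat -> Y)
  (q : nat -> nat -> R).

(* P(C_1 = j) *)
Definition cp_init (j : nat) : R :=
  if j == 0%N then q 0 1 else if j == 1%N then 1 - q 0 1 else 0.

(* P(C_i = j | C_{i-1} = j'), for i >= 2 and j' <= i-1 *)
Definition cp_trans (i j' j : nat) : R :=
  if j == i then 1 - q j' i else if j == j' then q j' i else 0.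

(* Forward density: cp_fwd c i is the density w.r.t. J (in the variable x)
   of the sub-probability measure
     A |-> P(C_1 = c 1, ..., C_i = c i, X_i \in A, Y_{1:i} \in dy_{1:i}) / dy_{1:i}
   (w.r.t. psi^i), obtained from the factorization of the model:
   a new segment (c i = i) draws X_i ~ J afresh, otherwise X_i = X_{i-1}. *)
Fixpoint cp_fwd (c : nat -> nat) (i : nat) (x : X) : R :=
  match i with
  | 0 => 1
  | i'.+1 =>
      p (y i) x
      * (if i' is 0 then cp_init (c 1%N) else cp_trans i (c i') (c i))
      * (if c i == i then Rintegral J setT (cp_fwd c i') else cp_fwd c i' x)
  end.

(* Joint density  p(C_{1:m} \in E, Y_{1:i} = y_{1:i})  for i <= m: the
   observations Y_{i+1}, ..., Y_m (and all X's) are integrated out, which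
   leaves the transition probabilities of C_{i+1}, ..., C_m. *)
Definition cp_dens (m i : nat) (E : (nat -> nat) -> bool) : R :=
  \sum_(c <- cp_paths m | E c)
     (\prod_(i.+1 <= k < m.+1) cp_trans k (c k.-1) (c k))
     * Rintegral J setT (cp_fwd c i).

Definition cp_cond (m i : nat) (E F : (nat -> nat) -> bool) : R :=
  cp_dens m i (fun c => E c && F c) / cp_dens m i F.

(* \tilde c_{ji}: for 0 < i < n, P(C_i = j | C_{i+1} = i+1, Y_{1:i} = y_{1:i});
   for i = n, P(C_n = j | Y_{1:n} = y_{1:n}). *)
Definition cp_ctilde (n j i : nat) : R :=
  if (i < n)%N then
    cp_cond i.+1 i (fun c => c i == j) (fun c => c i.+1 == i.+1)
  else cp_cond n n (fun c => c n == j) (fun _ => true).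

Definition cp_qtilde (n i : nat) : R :=
  cp_cond n n (fun c => c i == i) (fun _ => true).

End Changepoint.

From HB Require Import structures.
From mathcomp Require Import all_boot all_order all_algebra.
From mathcomp Require Import all_classical all_reals all_analysis.
From mathcomp Require Import zify ring.
Set Implicit Arguments.
Unset Strict Implicit.
Unset Printing Implicit Defensive.

Import Order.TTheory GRing.Theory Num.Theory.
Import numFieldNormedType.Exports.
Local Open Scope classical_set_scope.
Local Open Scope ring_scope.

(* Write the posterior of the changepoint path as a sum over paths of the
   forward density.  The segment that starts at [i] either ends with a
   changepoint at some [l + 1 <= n] or is still running at [n]; every other path
   makes a forbidden transition and has density zero.  On a changepoint at
   [l + 1] the forward density factors into the weight of the history up to
   [l + 1] times a term depending only on the path after [l + 1], so summing out
   the future multiplies the joint density of [C_l] and [C_(l+1) = l + 1] given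
   [Y_(1:l)] by a constant that cancels in [c~_il * q~_(l+1)]; this product is
   thus the posterior probability that the segment ends at [l]. *)

Definition path_upd (c : nat -> nat) (k j : nat) : nat -> nat :=
  fun t => if t == k then j else c t.

Definition path_bounded (c : nat -> nat) : Prop := forall k, (c k <= k)%N.

Definition admissible_step (c : nat -> nat) (k : nat) : bool :=
  (c k == k) || (c k == c k.-1).

Lemma path_upd_bounded c k j : path_bounded c -> (j <= k)%N ->
  path_bounded (path_upd c k j).
Proof. by move=> bc jk t; rewrite /path_upd; case: eqP => [->|]. Qed.

Section PathSums.
Variable R : nmodType.

Lemma big_cp_pathsS m (F : (nat -> nat) -> R) :
  \sum_(c <- cp_paths m.+1) F c =
  \sum_(c <- cp_paths m) \sum_(j <- iota 0 m.+2) F (path_upd c m.+1 j).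
Proof. exact: big_allpairs_dep. Qed.

Fixpoint sum_extensions (m k : nat) (F : (nat -> nat) -> R) : (nat -> nat) -> R :=
  match k with
  | 0 => F
  | k'.+1 => sum_extensions m k' (fun c => \sum_(j <- iota 0 (m + k').+2)
                                              F (path_upd c (m + k').+1 j))
  end.

Lemma big_cp_paths_add m k F :
  \sum_(c <- cp_paths (m + k)) F c = \sum_(c <- cp_paths m) sum_extensions m k F c.
Proof.
by elim: k F => [|k IH] F; rewrite ?addn0 // addnS big_cp_pathsS IH.
Qed.

Lemma eq_sum_extensions m k a (F : (nat -> nat) -> R) :
  (forall c c', (forall t, (a <= t <= m + k)%N -> c t = c' t) -> F c = F c') ->
  forall c c', (forall t, (a <= t <= m)%N -> c t = c' t) ->
  sum_extensions m k F c = sum_extensions m k F c'.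
Proof.
elim: k F => [|k IH] F Fdep c c' cc' /=.
  by apply: Fdep => t; rewrite addn0; apply: cc'.
apply: IH => // d d' dd'; apply: eq_bigr => j _; apply: Fdep => t /andP[ta tmk].
rewrite /path_upd; case: eqP => // /eqP tk; apply: dd'; lia.
Qed.

End PathSums.

Lemma sum_extensions_mull (R : pzSemiRingType) m k (A F : (nat -> nat) -> R) :
  (forall c c', (forall t, (t <= m)%N -> c t = c' t) -> A c = A c') ->
  forall c, sum_extensions m k (fun c => A c * F c) c = A c * sum_extensions m k F c.
Proof.
move=> Adep; elim: k F => [|k IH] F c //=.
rewrite -IH; congr sum_extensions; apply: funext => d.
rewrite mulr_sumr; apply: eq_bigr => j _; congr (_ * _); apply: Adep => t tm.
rewrite /path_upd; case: eqP => // tE; lia.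
Qed.

Lemma ler_sum_cp_paths (R : numDomainType) m (F G : (nat -> nat) -> R) :
  (forall c, path_bounded c -> F c <= G c) ->
  \sum_(c <- cp_paths m) F c <= \sum_(c <- cp_paths m) G c.
Proof.
elim: m F G => [|m IH] F G FG; first by rewrite !big_seq1; apply: FG.
rewrite !big_cp_pathsS; apply: IH => c bc; rewrite !big_seq; apply: ler_sum => j.
by rewrite mem_iota ltnS => /andP[_ jm]; apply/FG/path_upd_bounded.
Qed.

Lemma eq_big_cp_paths (R : numDomainType) m (F G : (nat -> nat) -> R) :
  (forall c, path_bounded c -> F c = G c) ->
  \sum_(c <- cp_paths m) F c = \sum_(c <- cp_paths m) G c.
Proof.
by move=> FG; apply/le_anti/andP; split; apply: ler_sum_cp_paths => c bc;
  rewrite FG.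
Qed.

Lemma indicator_segment_split (R : pzSemiRingType) (c : nat -> nat) i d :
  (forall k, (i < k <= i + d)%N -> admissible_step c k) ->
  ((c i == i)%:R : R) =
  \sum_(i <= l < i + d) ((c l == i) && (c l.+1 == l.+1))%:R
  + (c (i + d)%N == i)%:R.
Proof.
elim: d => [|d IH] adm; first by rewrite addn0 big_geq // add0r.
rewrite IH => [|k /andP[ik kd]]; last by apply: adm; lia.
rewrite addnS big_nat_recr ?leq_addr //= -addrA; congr (_ + _).
have [ne1 ne2] : ((i + d).+1 == i) = false /\ (i == (i + d).+1) = false.
  by split; apply/eqP; lia.
have /orP[/eqP->|/eqP->] := adm (i + d).+1 ltac:(lia).
  by rewrite eqxx andbT ne1 addr0.
by rewrite /=; case: eqP => [->|_]; rewrite ?ne2 add0r.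
Qed.

Lemma mul_div_through (F : fieldType) (b U V Z : F) : (V = 0 -> U = 0) ->
  U / V * (b * V / Z) = b * U / Z.
Proof.
have [->|V0] := eqVneq V 0; first by move=> /(_ erefl) ->; rewrite !(mulr0, mul0r).
have [->|Z0] := eqVneq Z 0; first by rewrite invr0 !mulr0.
by move=> _; field; rewrite Z0 V0.
Qed.

Lemma ge0_RintegralZl d (T : measurableType d) (R : realType)
    (mu : {measure set T -> \bar R}) (D : set T) (k : R) (f : T -> R) :
  measurable D -> 0 <= k -> measurable_fun D f -> (forall x, D x -> 0 <= f x) ->
  Rintegral mu D (fun x => k * f x) = k * Rintegral mu D f.
Proof.
move=> mD k0 mf f0; rewrite /Rintegral.
under eq_integral do rewrite EFinM.
rewrite ge0_integralZl_EFin //; last exact/measurable_realfun.measurable_EFinP.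
have [->|kp] := eqVneq k 0; first by rewrite mul0e !mul0r.
have kgt0 : 0 < k by rewrite lt0r kp.
by case: (\int[mu]_(x in D) (f x)%:E)%E => [r| |] //=;
  rewrite ?gt0_muley ?gt0_muleNy ?lte_fin ?mulr0.
Qed.

Section Changepoint.
Context (R : realType) (dX : measure_display) (X : measurableType dX)
  (J : probability X R) (dY : measure_display) (Y : measurableType dY)
  (p : Y -> X -> R) (y : nat -> Y) (q : nat -> nat -> R) (n : nat).
Hypotheses (hn : (1 <= n)%N)
  (hp_meas : measurable_fun setT (fun yx : Y * X => p yx.1 yx.2))
  (hp_ge0 : forall y0 x, 0 <= p y0 x)
  (hq : forall j i, (j < i <= n)%N -> 0 <= q j i <= 1).

Local Notation fwd := (cp_fwd J p y q).
Local Notation intJ f := (Rintegral J setT f).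

Lemma measurable_p y0 : measurable_fun setT (p y0).
Proof. exact: measurableT_comp hp_meas (pair1_measurable y0). Qed.

Lemma cp_init_ge0 j : 0 <= cp_init q j.
Proof.
have /andP[q0 q1] : 0 <= q 0 1 <= 1 by apply: hq; rewrite /= hn.
by rewrite /cp_init; case: ifP => _ //; case: ifP => _ //; rewrite subr_ge0.
Qed.

Lemma cp_trans_ge0 k j' j : (j' < k <= n)%N -> 0 <= cp_trans q k j' j.
Proof.
move=> /hq /andP[q0 q1]; rewrite /cp_trans.
by case: ifP => _; [rewrite subr_ge0 | case: ifP].
Qed.

Lemma cp_fwd_ge0 c k x : path_bounded c -> (k <= n)%N -> 0 <= fwd c k x.
Proof.
move=> bc; elim: k x => [|k IH] x kn //=.
rewrite mulr_ge0 ?mulr_ge0 //.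
- case: k IH kn => [|k] IH kn; first exact: cp_init_ge0.
  by apply: cp_trans_ge0; have := bc k.+1; lia.
- by case: ifP => _; [apply: Rintegral_ge0 => z _; apply: IH | apply: IH]; lia.
Qed.

Lemma eq_cp_fwd c c' k : (forall t, (t <= k)%N -> c t = c' t) -> fwd c k = fwd c' k.
Proof.
elim: k => [|k IH] cc' //.
apply: funext => x /=; rewrite (IH (fun t tk => cc' t (leqW tk))).
rewrite (cc' k.+1) //; case: k {IH} cc' => [|k] cc'; first by rewrite (cc' 1%N).
by rewrite (cc' k.+1).
Qed.

Lemma cp_fwd_succ c k x : (0 < k)%N -> fwd c k.+1 x =
  p (y k.+1) x * cp_trans q k.+1 (c k) (c k.+1)
  * (if c k.+1 == k.+1 then intJ (fwd c k) else fwd c k x).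
Proof. by case: k. Qed.

Lemma cp_fwd_eq0 c k m : (1 < k <= m)%N -> ~~ admissible_step c k ->
  fwd c m = fun _ => 0.
Proof.
move=> /andP[k1 km] ck; rewrite -(subnK km); elim: (m - k)%N => [|s IH].
  case: k k1 ck {km} => [|[|k]] // _ /norP[/negbTE ck /negbTE ck'].
  by apply: funext => x; rewrite /= /cp_trans ck ck' mulr0 mul0r.
apply: funext => x; rewrite addSn /= IH Rintegral_cst // mul0r.
by case: ifP; rewrite mulr0.
Qed.

Definition cp_weight (m i : nat) (c : nat -> nat) : R :=
  (\prod_(i.+1 <= k < m.+1) cp_trans q k (c k.-1) (c k)) * intJ (fwd c i).

Lemma cp_dens_mkcond m i E : cp_dens J p y q m i E =
  \sum_(c <- cp_paths m) (E c)%:R * cp_weight m i c.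
Proof.
rewrite /cp_dens big_mkcond; apply: eq_bigr => c _.
by case: (E c); rewrite ?mul1r ?mul0r.
Qed.

Lemma cp_cond_true m i E : cp_cond J p y q m i E (fun _ => true) =
  cp_dens J p y q m i E / cp_dens J p y q m i (fun _ => true).
Proof. by congr (_ / _); apply: eq_bigl => c; rewrite andbT. Qed.

Lemma cp_weight_ge0 m i c : path_bounded c -> (i <= n)%N -> (m <= n)%N ->
  0 <= cp_weight m i c.
Proof.
move=> bc iN mN; rewrite mulr_ge0 //.
  rewrite big_seq prodr_ge0 // => k; rewrite mem_iota => /andP[ik km].
  apply: cp_trans_ge0; have := bc k.-1; lia.
by apply: Rintegral_ge0 => x _; apply: cp_fwd_ge0.
Qed.

Lemma eq_cp_weight m i c c' : (i <= m)%N ->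
  (forall t, (t <= m)%N -> c t = c' t) -> cp_weight m i c = cp_weight m i c'.
Proof.
move=> im cc'; rewrite /cp_weight (@eq_cp_fwd c c') => [|t ti]; last first.
  by apply: cc'; lia.
congr (_ * _); rewrite !big_seq; apply: eq_bigr => k; rewrite mem_iota => /andP[_ km].
rewrite !cc' //; lia.
Qed.

Lemma le_cp_dens m i (E F : (nat -> nat) -> bool) : (i <= n)%N -> (m <= n)%N ->
  (forall c, E c -> F c) -> cp_dens J p y q m i E <= cp_dens J p y q m i F.
Proof.
move=> iN mN EF; rewrite !cp_dens_mkcond; apply: ler_sum_cp_paths => c bc.
apply: ler_wpM2r; first exact: cp_weight_ge0.
by case/boolP: (E c) => [/EF ->|] //; rewrite ler_nat.
Qed.

Lemma cp_dens_ge0 m i E : (i <= n)%N -> (m <= n)%N -> 0 <= cp_dens J p y q m i E.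
Proof.
move=> iN mN; have := @le_cp_dens m i xpred0 E iN mN.
by rewrite {1}/cp_dens big_pred0 //; apply.
Qed.

Lemma cp_dens_segment_split i : (0 < i <= n)%N ->
  cp_dens J p y q n n (fun c => c i == i) =
  \sum_(i <= l < n) cp_dens J p y q n n (fun c => (c l == i) && (c l.+1 == l.+1))
  + cp_dens J p y q n n (fun c => c n == i).
Proof.
move=> /andP[i0 iN]; under eq_bigr do rewrite cp_dens_mkcond.
rewrite !cp_dens_mkcond exchange_big -big_split /=.
apply: eq_bigr => c _; rewrite -mulr_suml -mulrDl.
have [->|W0] := eqVneq (cp_weight n n c) 0; first by rewrite !mulr0.
rewrite (@indicator_segment_split _ c i (n - i)) subnKC // => k /andP[ik kn].
apply: contraT => bad; case/eqP: W0.
by rewrite /cp_weight big_geq // mul1r (@cp_fwd_eq0 c k) ?Rintegral_cst ?mul0r //; lia.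
Qed.

(* [cp_seg a c s] is the forward density at time [a + s] of a path with a
   changepoint at [a], with the weight of its history before [a] factored out. *)
Fixpoint cp_seg (a : nat) (c : nat -> nat) (s : nat) (x : X) : R :=
  match s with
  | 0 => p (y a) x
  | s'.+1 =>
      p (y (a + s').+1) x * cp_trans q (a + s').+1 (c (a + s')%N) (c (a + s').+1)
      * (if c (a + s').+1 == (a + s').+1 then intJ (cp_seg a c s') else cp_seg a c s' x)
  end.

Lemma measurable_cp_seg a c s : measurable_fun setT (cp_seg a c s).
Proof.
elim: s => [|s IH] /=; first exact: measurable_p.
apply: measurable_realfun.measurable_funM.
  exact/measurable_realfun.measurable_funM/measurable_cst/measurable_p.
by case: (c (a + s).+1 == (a + s).+1); [exact: measurable_cst | exact: IH].
Qed.

Lemma cp_seg_ge0 a c s x : path_bounded c -> (a + s <= n)%N -> 0 <= cp_seg a c s x.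
Proof.
move=> bc; elim: s x => [|s IH] x sn /=; first exact: hp_ge0.
rewrite mulr_ge0 ?mulr_ge0 //; first by apply: cp_trans_ge0; have := bc (a + s)%N; lia.
by case: ifP => _; [apply: Rintegral_ge0 => z _; apply: IH | apply: IH]; lia.
Qed.

Lemma eq_cp_seg a c c' s : (forall t, (a <= t <= a + s)%N -> c t = c' t) ->
  cp_seg a c s = cp_seg a c' s.
Proof.
elim: s => [|s IH] cc' //; apply: funext => x /=.
rewrite (IH (fun t ts => cc' t _)) ?(cc' (a + s).+1) ?(cc' (a + s)%N) //; lia.
Qed.

Lemma cp_fwd_restart l c : (1 <= l)%N -> path_bounded c -> c l.+1 = l.+1 ->
  forall s, (l.+1 + s <= n)%N ->
  fwd c (l.+1 + s) = fun x => cp_weight l.+1 l c * cp_seg l.+1 c s x.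
Proof.
move=> l1 bc cl; elim=> [|s IH] sn; apply: funext => x.
  rewrite addn0 /cp_weight big_nat1 /= cl eqxx.
  by case: l l1 cl {sn} => [//|l] _ cl /=; ring.
rewrite addnS cp_fwd_succ ?addSn // -addSn IH /=; last by lia.
case: ifP => _; last by ring.
rewrite ge0_RintegralZl //; first by ring.
- by apply: cp_weight_ge0 => //; lia.
- exact: measurable_cp_seg.
- by move=> z _; apply: cp_seg_ge0 => //; lia.
Qed.

Lemma cp_weight_restart l c : (1 <= l < n)%N -> path_bounded c -> c l.+1 = l.+1 ->
  cp_weight n n c = cp_weight l.+1 l c * intJ (cp_seg l.+1 c (n - l.+1)).
Proof.
move=> /andP[l1 ln] bc cl.
rewrite /cp_weight big_geq // mul1r -{1}(subnKC ln) cp_fwd_restart ?subnKC //.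
rewrite ge0_RintegralZl //.
- by apply: cp_weight_ge0 => //; lia.
- exact: measurable_cp_seg.
- by move=> z _; apply: cp_seg_ge0 => //; rewrite subnKC.
Qed.

(* The base path [fun _ => l.+1] is arbitrary: by [eq_sum_extensions] every
   path with [c (l + 1) = l + 1] gives the same value. *)
Definition cp_tail (l : nat) : R :=
  sum_extensions l.+1 (n - l.+1) (fun c => intJ (cp_seg l.+1 c (n - l.+1)))
    (fun _ => l.+1).

Lemma cp_dens_restart l (E : (nat -> nat) -> bool) : (1 <= l < n)%N ->
  (forall c, E c -> c l.+1 = l.+1) ->
  (forall c c', (forall t, (t <= l.+1)%N -> c t = c' t) -> E c = E c') ->
  cp_dens J p y q n n E = cp_tail l * cp_dens J p y q l.+1 l E.
Proof.
move=> /andP[l1 ln] Erestart Eprefix; rewrite !cp_dens_mkcond.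
transitivity (\sum_(c <- cp_paths n)
    (E c)%:R * cp_weight l.+1 l c * intJ (cp_seg l.+1 c (n - l.+1))).
  apply: eq_big_cp_paths => c bc; case Ec: (E c); last by rewrite !mul0r.
  by rewrite (@cp_weight_restart l c) ?l1 ?mulrA // Erestart.
have -> : cp_paths n = cp_paths (l.+1 + (n - l.+1)) by rewrite subnKC.
rewrite big_cp_paths_add mulr_sumr; apply: eq_bigr => c _.
rewrite (@sum_extensions_mull _ _ _ (fun c => (E c)%:R * cp_weight l.+1 l c)); last first.
  by move=> d d' dd'; rewrite (Eprefix d d') // (@eq_cp_weight _ _ d d').
case Ec: (E c); last by rewrite !mul0r mulr0.
rewrite mulrC; congr (_ * _); apply: (@eq_sum_extensions _ _ _ l.+1).
  by move=> d d' dd'; rewrite (@eq_cp_seg _ d d') // => t; rewrite subnKC.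
by move=> t tl; rewrite (_ : t = l.+1) ?Erestart //; lia.
Qed.

Lemma cp_ctilde_qtildeS i l : (0 < i <= l)%N -> (l < n)%N ->
  cp_ctilde J p y q n i l * cp_qtilde J p y q n l.+1 =
  cp_dens J p y q n n (fun c => (c l == i) && (c l.+1 == l.+1))
  / cp_dens J p y q n n (fun _ => true).
Proof.
move=> /andP[i0 il] ln; have l1 : (1 <= l < n)%N by rewrite ln andbT (leq_trans i0).
rewrite /cp_ctilde ln /cp_qtilde cp_cond_true /cp_cond.
rewrite (@cp_dens_restart l (fun c => (c l == i) && (c l.+1 == l.+1))) //; first last.
- by move=> d d' dd'; rewrite !dd'.
- by move=> d /andP[_ /eqP].
rewrite (@cp_dens_restart l (fun c => c l.+1 == l.+1)) //; first last.
- by move=> d d' dd'; rewrite dd'.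
- by move=> d /eqP.
have lN := ltnW ln.
apply: mul_div_through => V0; apply/eqP; rewrite eq_le cp_dens_ge0 // andbT.
by rewrite -V0 le_cp_dens // => d /andP[].
Qed.

End Changepoint.

Theorem mainTheorem9 (R : realType)
  (dX : measure_display) (X : measurableType dX) (J : probability X R)
  (dY : measure_display) (Y : measurableType dY)
  (psi : {measure set Y -> \bar R}) (p : Y -> X -> R)
  (n : nat) (y : nat -> Y) (q : nat -> nat -> R)
  (hn : (1 <= n)%N)
  (hpsi : sigma_finite setT psi)
  (hp_meas : measurable_fun setT (fun yx : Y * X => p yx.1 yx.2))
  (hp_ge0 : forall y0 x, 0 <= p y0 x)
  (hp_dens : forall x, (\int[psi]_y0 (p y0 x)%:E = 1)%E)
  (hq : forall j i, (j < i <= n)%N -> 0 <= q j i <= 1)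
  (hpos : forall j i, (0 < j <= i)%N -> (i <= n)%N ->
     (0 < \int[J]_x (\prod_(j <= l < i.+1) p (y l) x)%:E < +oo)%E)
  (i : nat) (hi : (0 < i <= n)%N) :
  cp_qtilde J p y q n i =
    \sum_(i <= l < n) cp_ctilde J p y q n i l * cp_qtilde J p y q n l.+1
    + cp_ctilde J p y q n i n.
Proof.
have [i0 _] := andP hi.
rewrite /cp_qtilde cp_cond_true cp_dens_segment_split // mulrDl mulr_suml.
congr (_ + _); last by rewrite /cp_ctilde ltnn cp_cond_true.
by apply: eq_big_nat => l /andP[il ln]; rewrite cp_ctilde_qtildeS ?i0.
Qed.
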